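(* Let $R$ be a process and $X=(X_1,\dots,X_m)$ a risk basis with $R(t)=\varrho((X_1,\dots,X_m)^t)$ for a mapping $\varrho$. Suppose $X$ generates the ISU decomposition $D(t)=(D_1(t),\dots,D_m(t))$ of $R(t)-R(0)$ with respect to a sequence of partitions $(\mathcal T_n(t))_n$ of $[0,t]$ with vanishing mesh. Let $\mathcal G$ be a sub-$\sigma$-algebra of $\mathcal A$. Suppose the SU decompositions $D^n(t)=(D^n_1(t),\dots,D^n_m(t))$ of $R(t)-R(0)$ with respect to $\mathcal T_n(t)$ satisfy $|D^n_i(t)|\le Y$ for all $i=1,\dots,m$ and $n\in\mathbb N$, for some integrable random variable $Y$. Then the ISU decomposition (with respect to the same sequence of partitions) of $$\widetilde R(t)=\widetilde\varrho((X_1,\dots,X_m)^t):=\mathbb E\big[\varrho((X_1,\dots,X_m)^t)\,\big|\,\mathcal G\big],$$ where $\widetilde\varrho(\cdot):=\mathbb E[\varrho(\cdot)\mid\mathcal G]$, is $$\widetilde D(t)=\big(\mathbb E[D_1(t)\mid\mathcal G],\dots,\mathbb E[D_m(t)\mid\mathcal G]\big).$$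
   Context: **Setting.** $(\Omega,\mathcal A,\mathbb P)$ is a probability space. For a process $Y$, $Y^t(s)=Y(\min(s,t))$, componentwise for tuples. **Surface.** $U(t_1,\dots,t_m)=\varrho((X_1^{t_1},\dots,X_m^{t_m}))$. **SU decomposition.** For a partition $0=t_0<\dots<t_k=t$, the SU decomposition of $R(t)-R(0)$ is $$D_i(t)=\sum_{l=0}^{k-1}\Big(U(\underbrace{t_{l+1},\dots,t_{l+1}}_{i},t_l,\dots,t_l)-U(\underbrace{t_{l+1},\dots,t_{l+1}}_{i-1},t_l,\dots,t_l)\Big),\quad i=1,\dots,m.$$ **ISU decomposition.** For partitions $\mathcal T_n(t)$ with maximal step length tending to $0$, the ISU decomposition is $D(t)$ with $D_i(t)=\operatorname{plim}_{n\to\infty}D^n_i(t)$ (limit in probability), where $D^n(t)$ are the SU decompositions with respect to $\mathcal T_n(t)$. *)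

From HB Require Import structures.
From mathcomp Require Import all_boot all_order all_algebra.
From mathcomp Require Import all_classical all_reals all_analysis.
Set Implicit Arguments. Unset Strict Implicit. Unset Printing Implicit Defensive.
Import Order.TTheory GRing.Theory Num.Theory.
Import numFieldNormedType.Exports.
Local Open Scope classical_set_scope.
Local Open Scope ring_scope.

(* Time vectors are 'I_m -> R, processes are R -> T -> R (time, outcome). *)

(** Surface: U(t_1,...,t_m) = rho((X_1^{t_1},...,X_m^{t_m})),
    with Y^t(s) = Y(min(s,t)). *)
Definition surface {R : realType} {T : Type} {m : nat}
  (rho : ('I_m -> R -> T -> R) -> T -> R) (X : 'I_m -> R -> T -> R)
  (tau : 'I_m -> R) : T -> R :=
  rho (fun j s => X j (Num.min s (tau j))).

Definition is_partition {R : realType} (t : R) (s : seq R) : Prop :=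
  [/\ head 1 s = 0, last 0 s = t & sorted (fun a b => a < b) s].

Definition mesh {R : realType} (s : seq R) : R :=
  \big[Num.max/0]_(l < (size s).-1) (nth 0 s l.+1 - nth 0 s l).

(** SU decomposition w.r.t. the partition s; the index i : 'I_m (0-based)
    corresponds to the paper's index i+1. *)
Definition su_dec {R : realType} {T : Type} {m : nat}
  (U : ('I_m -> R) -> T -> R) (s : seq R) (i : 'I_m) : T -> R :=
  fun w => \sum_(l < (size s).-1)
    (U (fun j => if (j <= i)%N then nth 0 s l.+1 else nth 0 s l) w
     - U (fun j => if (j < i)%N then nth 0 s l.+1 else nth 0 s l) w).

Definition conv_in_prob {d} {T : measurableType d} {R : realType}
  (P : probability T R) (Xn : nat -> T -> R) (X : T -> R) : Prop :=
  forall e : R, 0 < e ->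
    (fun n => P [set w | e < `|Xn n w - X w|]) @ \oo --> 0%E.

Definition is_sub_sigma_algebra {d} {T : measurableType d} (G : set (set T)) :=
  sigma_algebra setT G /\ G `<=` measurable.

Definition is_cond_exp {d} {T : measurableType d} {R : realType}
  (P : probability T R) (G : set (set T)) (Y Z : T -> R) : Prop :=
  [/\ P.-integrable setT (EFin \o Y),
      P.-integrable setT (EFin \o Z),
      (forall B : set R, measurable B -> G (Z @^-1` B)) &
      (forall A, G A ->
         (\int[P]_(x in A) (Z x)%:E = \int[P]_(x in A) (Y x)%:E)%E)].

From HB Require Import structures.
From mathcomp Require Import all_boot all_order all_algebra.
From mathcomp Require Import all_classical all_reals all_analysis.
From mathcomp Require Import measurable_realfun lra zify.
Import Order.TTheory GRing.Theory Num.Theory.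
Import numFieldNormedType.Exports.
Local Open Scope classical_set_scope.
Local Open Scope ring_scope.
Set Implicit Arguments. Unset Strict Implicit. Unset Printing Implicit Defensive.

(* Conditional expectation is linear, so along each partition the SU
   decomposition of E[rho(X^tau) | G] is the conditional expectation of the SU
   decomposition of R.  Being an L^1 contraction, conditional expectation then
   transports L^1 convergence, and Markov's inequality turns L^1 convergence
   into convergence in probability.  It thus suffices that D^n_i(t) -> D_i(t)
   in L^1: the limit in probability is dominated a.e. by Y + 1, so
   |D^n_i(t) - D_i(t)| <= 2Y + 1 a.e., and absolute continuity of the integral
   of 2Y + 1 controls the sets where D^n_i(t) is far from D_i(t).  Existence of
   E[D_i(t) | G] is the Radon-Nikodym theorem on (Omega, G). *)

Lemma ge0_integral_setC d (T : measurableType d) (R : realType) (mu : measure T R)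
  (A : set T) (f : T -> \bar R) :
  d.-measurable A -> measurable_fun setT f -> (forall x, 0 <= f x)%E ->
  (\int[mu]_x f x = \int[mu]_(x in A) f x + \int[mu]_(x in ~` A) f x)%E.
Proof.
by move=> mA mf f0; rewrite -ge0_integral_setU ?setUCr //;
  [exact: measurableC | rewrite /disj_set setICr].
Qed.

Section conditional_expectation.
Context d (T : measurableType d) (R : realType) (P : probability T R)
  (G : set (set T)).
Hypothesis HG : is_sub_sigma_algebra G.

Local Notation TG := (g_sigma_algebraType G).

Lemma g_sigma_measurableE : (measurable : set (set TG)) = G.
Proof. exact: (sigma_algebra_id HG.1). Qed.

Lemma measurable_fun_g_sigmaP (f : T -> R) :
  (forall B, measurable B -> G (f @^-1` B)) <-> measurable_fun setT (f : TG -> R).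
Proof.
split=> [Gf _ B mB | mf B mB]; first by rewrite setTI g_sigma_measurableE; exact: Gf.
by rewrite -g_sigma_measurableE -[_ @^-1` _]setTI; exact: mf.
Qed.

Lemma measurable_id_g_sigma : measurable_fun setT (idfun : T -> TG).
Proof. by move=> _ B; rewrite g_sigma_measurableE setTI; apply: HG.2. Qed.

Definition to_g_sigma : T -> TG := id.

HB.instance Definition _ :=
  isMeasurableFun.Build _ _ T TG to_g_sigma measurable_id_g_sigma.

(* The restriction of P to G, as the image of P under the identity. *)
Local Notation PG := (distribution P to_g_sigma).

Lemma integral_g_sigma (A : set T) (f : TG -> \bar R) : G A ->
  measurable_fun setT f -> P.-integrable A f ->
  (\int[PG]_(x in (A : set TG)) f x = \int[P]_(x in A) f x)%E.
Proof.
move=> GA mf intf.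
by rewrite /distribution integral_pushforward // g_sigma_measurableE.
Qed.
Lemma measurable_of_g_sigma (A : set TG) : measurable A -> d.-measurable (A : set T).
Proof. by rewrite g_sigma_measurableE; apply: HG.2. Qed.

Section charge_on_g_sigma.
Variables (f : T -> R) (intf : P.-integrable setT (EFin \o f)).

Definition charge_g_sigma (A : set TG) := induced_charge intf A.

Let charge_g_sigma0 : charge_g_sigma set0 = 0%E.
Proof. exact: integral_set0. Qed.

Let charge_g_sigma_fin A : measurable A -> charge_g_sigma A \is a fin_num.
Proof.
by move=> mA; apply: (fin_num_measure (induced_charge intf)); apply: measurable_of_g_sigma.
Qed.

Let charge_g_sigma_sigma_additive : semi_sigma_additive charge_g_sigma.
Proof.
move=> F mF tF mUF; exact: (@charge_semi_sigma_additive _ _ _ (induced_charge intf) F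
  (fun n => measurable_of_g_sigma (mF n)) tF (measurable_of_g_sigma mUF)).
Qed.

HB.instance Definition _ := isCharge.Build _ _ _ charge_g_sigma
  charge_g_sigma0 charge_g_sigma_fin charge_g_sigma_sigma_additive.

Lemma charge_g_sigma_dominates : charge_g_sigma `<< PG.
Proof.
apply/null_content_dominatesP => A mA PA0.
apply: null_set_integral => //; first exact: measurable_of_g_sigma.
apply/measurable_EFinP; apply: measurable_funTS.
by have /integrableP[/measurable_EFinP] := intf.
Qed.

End charge_on_g_sigma.

Lemma cond_exp_exists (f : T -> R) : P.-integrable setT (EFin \o f) ->
  exists Z, is_cond_exp P G f Z.
Proof.
move=> intf.
pose RN := Radon_Nikodym (charge_g_sigma intf) PG.
have dom := charge_g_sigma_dominates intf.
have RNfin x : RN x \is a fin_num by apply: Radon_Nikodym_fin_num.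
have /integrableP[mRN RNfinite] : PG.-integrable setT RN by apply: Radon_Nikodym_integrable.
have RN_int : P.-integrable setT RN.
  apply/integrableP; split; first exact: (measurableT_comp mRN measurable_id_g_sigma).
  by move: RNfinite; rewrite ge0_integral_distribution //; exact: measurableT_comp.
have EFin_fineRN : EFin \o (fine \o RN) = RN by apply/funext => x /=; rewrite fineK.
exists (fine \o RN); split => //; first by rewrite EFin_fineRN.
- apply/measurable_fun_g_sigmaP.
  exact: (measurableT_comp (fine_measurable measurableT) mRN).
- move=> A GA.
  transitivity (\int[P]_(x in A) RN x)%E; first by apply: eq_integral => x _; rewrite /= fineK.
  rewrite -integral_g_sigma //; last by apply: integrableS RN_int => //; apply: HG.2.
  by rewrite -Radon_Nikodym_integral // g_sigma_measurableE.
Qed.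

Lemma integrable_on_g_sigma (A : set T) (f : T -> \bar R) :
  G A -> P.-integrable setT f -> P.-integrable A f.
Proof. by move=> GA intf; apply: integrableS intf => //; apply: HG.2. Qed.

Lemma is_cond_exp0 : is_cond_exp P G (fun=> 0) (fun=> 0).
Proof.
have int0 : P.-integrable setT (EFin \o (fun _ : T => (0 : R))) by exact: integrable0.
by split=> //; apply/measurable_fun_g_sigmaP; exact: measurable_cst.
Qed.

Lemma is_cond_expD (W1 W2 Z1 Z2 : T -> R) :
  is_cond_exp P G W1 Z1 -> is_cond_exp P G W2 Z2 ->
  is_cond_exp P G (fun w => W1 w + W2 w) (fun w => Z1 w + Z2 w).
Proof.
move=> [iW1 iZ1 mZ1 eZ1] [iW2 iZ2 mZ2 eZ2]; split.
- exact: (integrableD measurableT iW1 iW2).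
- exact: (integrableD measurableT iZ1 iZ2).
- by apply/measurable_fun_g_sigmaP; apply: measurable_funD; apply/measurable_fun_g_sigmaP.
- move=> A GA; have mA := HG.2 _ GA.
  rewrite [LHS](integralD_EFin mA) ?[RHS](integralD_EFin mA) ?eZ1 ?eZ2 //;
    exact: integrable_on_g_sigma.
Qed.

Lemma is_cond_expB (W1 W2 Z1 Z2 : T -> R) :
  is_cond_exp P G W1 Z1 -> is_cond_exp P G W2 Z2 ->
  is_cond_exp P G (fun w => W1 w - W2 w) (fun w => Z1 w - Z2 w).
Proof.
move=> [iW1 iZ1 mZ1 eZ1] [iW2 iZ2 mZ2 eZ2]; split.
- exact: (integrableB measurableT iW1 iW2).
- exact: (integrableB measurableT iZ1 iZ2).
- by apply/measurable_fun_g_sigmaP; apply: measurable_funB; apply/measurable_fun_g_sigmaP.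
- move=> A GA; have mA := HG.2 _ GA.
  rewrite [LHS](integralB_EFin mA) ?[RHS](integralB_EFin mA) ?eZ1 ?eZ2 //;
    exact: integrable_on_g_sigma.
Qed.

Lemma is_cond_expN (W Z : T -> R) : is_cond_exp P G W Z ->
  is_cond_exp P G (fun w => - W w) (fun w => - Z w).
Proof.
move=> WZ; have := is_cond_expB is_cond_exp0 WZ.
by under eq_fun do rewrite sub0r; under [X in is_cond_exp _ _ _ X]eq_fun do rewrite sub0r.
Qed.

Lemma is_cond_exp_sum n (W Z : 'I_n -> T -> R) :
  (forall l, is_cond_exp P G (W l) (Z l)) ->
  is_cond_exp P G (fun w => \sum_(l < n) W l w) (fun w => \sum_(l < n) Z l w).
Proof.
elim: n W Z => [|n IH] W Z WZ.
  by under eq_fun do rewrite big_ord0; under [X in is_cond_exp _ _ _ X]eq_fun do rewrite big_ord0;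
    exact: is_cond_exp0.
under eq_fun do rewrite big_ord_recr; under [X in is_cond_exp _ _ _ X]eq_fun do rewrite big_ord_recr.
by apply: is_cond_expD => //; apply: IH.
Qed.

Lemma cond_exp_contraction (W Z : T -> R) : is_cond_exp P G W Z ->
  (\int[P]_x `|(Z x)%:E| <= \int[P]_x `|(W x)%:E|)%E.
Proof.
move=> WZ; have [iW iZ mZ eZ] := WZ; have [iNW _ _ eNZ] := is_cond_expN WZ.
have /integrableP[mWE _] := iW; have /integrableP[mZE _] := iZ.
have /integrableP[mNWE _] := iNW.
pose A := Z @^-1` `[0, +oo[.
have GA : G A by apply: mZ; exact: measurable_itv.
have GAc : G (~` A) by case: HG.1 => _ GC _; rewrite -setTD; exact: GC.
have mA := HG.2 _ GA.
have le_abs (B : set T) (f : T -> R) : d.-measurable B ->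
    measurable_fun setT (EFin \o f) ->
    (\int[P]_(x in B) (f x)%:E <= \int[P]_(x in B) `|(f x)%:E|)%E.
  move=> mB mf; apply: le_trans (lee_abs _) _.
  by apply: le_abse_integral => //; exact: measurable_funTS.
rewrite !(ge0_integral_setC _ mA) //; try by apply: measurableT_comp.
have -> : (\int[P]_(x in A) `|(Z x)%:E| = \int[P]_(x in A) (Z x)%:E)%E.
  by apply: eq_integral => x; rewrite inE /A /= in_itv /= andbT => Zx; rewrite ger0_norm.
have -> : (\int[P]_(x in ~` A) `|(Z x)%:E| = \int[P]_(x in ~` A) (- Z x)%:E)%E.
  apply: eq_integral => x; rewrite inE /A /= in_itv /= andbT => /negP.
  by rewrite -ltNge => Zx; rewrite ltr0_norm.
rewrite eZ // eNZ //; apply: leeD; first exact: le_abs.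
under [leRHS]eq_integral do rewrite -abseN -EFinN.
by apply: le_abs => //; exact: measurableC.
Qed.

End conditional_expectation.

Section convergence_in_probability.
Context d (T : measurableType d) (R : realType) (P : probability T R).

Lemma measurable_lt_fun (f g : T -> R) :
  measurable_fun setT f -> measurable_fun setT g -> d.-measurable [set w | f w < g w].
Proof.
move=> mf mg; rewrite -[X in measurable X]setTI.
apply: (measurable_fun_ltr mf mg measurableT) => //.
Qed.

Lemma markov_normr (f : T -> R) (e : R) : 0 < e -> measurable_fun setT f ->
  (e%:E * P [set w | (e < `|f w|)%R] <= \int[P]_x `|(f x)%:E|)%E.
Proof.
move=> e0 mf.
have mfe : d.-measurable [set w | e < `|f w|].
  by apply: measurable_lt_fun => //; exact: measurableT_comp.
have mfabs : measurable_fun setT (fun x => `|(f x)%:E|%E).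
  by apply: measurableT_comp => //; exact/measurable_EFinP.
rewrite -integral_cst //.
apply: (@le_trans _ _ (\int[P]_(x in [set w | (e < `|f w|)%R]) `|(f x)%:E|)%E).
  apply: ge0_le_integral => //; first by move=> x _; rewrite lee_fin ltW.
    exact: measurable_funTS.
  by move=> x /= /ltW.
exact: ge0_subset_integral.
Qed.

Lemma integral_le_cst (A : set T) (f : T -> \bar R) (e : R) : d.-measurable A ->
  measurable_fun A f -> 0 <= e -> (forall x, A x -> 0 <= f x <= e%:E)%E ->
  (\int[P]_(x in A) f x <= e%:E)%E.
Proof.
move=> mA mf e0 fe; apply: (@le_trans _ _ (\int[P]_(x in A) (cst e%:E) x)%E).
  apply: ge0_le_integral => //; first by move=> x /fe /andP[].
  by move=> x /fe /andP[].
rewrite integral_cst // -[leRHS]mule1; apply: lee_wpmul2l; first by rewrite lee_fin.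
exact: probability_le1.
Qed.

Lemma conv_in_prob_L1 (f : nat -> T -> R) (g : T -> R) :
  (forall n, measurable_fun setT (fun w => f n w - g w)) ->
  (forall eps, 0 < eps -> \forall n \near \oo,
     (\int[P]_x `|(f n x - g x)%:E| <= eps%:E)%E) ->
  conv_in_prob P f g.
Proof.
move=> mfg L1 e e0.
have mA n : d.-measurable [set w | e < `|f n w - g w|].
  by apply: measurable_lt_fun => //; exact: measurableT_comp.
apply/fine_cvgP; split; first by apply: nearW => n; exact: fin_num_measure.
apply/cvgrPdist_le => eta eta0; have := L1 _ (mulr_gt0 e0 eta0).
apply: filterS => n fgn.
have PA := le_trans (markov_normr e0 (mfg n)) fgn.
rewrite -(fineK (fin_num_measure P _ (mA n))) -EFinM lee_fin ler_pM2l // in PA.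
by rewrite sub0r normrN ger0_norm // fine_ge0.
Qed.

Section dominated_convergence_in_probability.
Variables (S : nat -> T -> R) (D Y : T -> R).
Hypotheses (mS : forall n, measurable_fun setT (S n)) (mD : measurable_fun setT D).
Hypotheses (intY : P.-integrable setT (EFin \o Y)) (SY : forall n w, `|S n w| <= Y w).
Hypothesis SD : conv_in_prob P S D.

Let mY : measurable_fun setT Y.
Proof. by apply/measurable_EFinP; case/integrableP : intY. Qed.

Let Y_ge0 w : 0 <= Y w.
Proof. exact: le_trans (normr_ge0 _) (SY 0 w). Qed.

Let N := [set w | Y w + 1 < `|D w|].

Let mN : d.-measurable N.
Proof. by apply: measurable_lt_fun; [exact: measurable_funD | exact: measurableT_comp]. Qed.

Lemma conv_in_prob_dominated_null : P [set w | Y w + 1 < `|D w|] = 0%E.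
Proof.
have PN_le n : (P N <= P [set w | (1 < `|S n w - D w|)%R])%E.
  apply: le_measure; rewrite ?inE //.
    by apply: measurable_lt_fun => //; apply: measurableT_comp => //; exact: measurable_funB.
  rewrite /N => w /= Nw; have := SY n w; have := ler_normB (S n w) (S n w - D w).
  rewrite opprB addrCA subrr addr0; lra.
have cv := SD ltr01.
have : (P N <= 0)%E.
  by rewrite -(cvg_lim _ cv) //; apply: lime_ge; [exact: cvgP cv | exact: nearW].
by rewrite le_eqVlt ltNge measure_ge0 orbF => /eqP.
Qed.

Let ae_off_N (Q : T -> Prop) : (forall w, ~ N w -> Q w) -> {ae P, forall w, Q w}.
Proof.
move=> NQ; exists N; split => //; first exact: conv_in_prob_dominated_null.
by move=> w /= nQw; apply: contrapT => Nw; exact/nQw/NQ.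
Qed.

Let Z w := Y w + Y w + 1.

Let Z_ge0 w : 0 <= Z w.
Proof. by have := Y_ge0 w; rewrite /Z; lra. Qed.

Let intZ : P.-integrable setT (EFin \o Z).
Proof.
exact: (integrableD measurableT (integrableD measurableT intY intY)
  (finite_measure_integrable_cst P 1 measurableT)).
Qed.

Let mZ : measurable_fun setT (EFin \o Z).
Proof. by case/integrableP : intZ. Qed.

Let D_le_Z w : ~ N w -> `|D w| <= Z w.
Proof. by move/negP; rewrite -leNgt /Z => DY; have := Y_ge0 w; lra. Qed.

Let SD_le_Z n w : ~ N w -> `|S n w - D w| <= Z w.
Proof.
move=> /negP; rewrite -leNgt /Z => DY.
by have := ler_normB (S n w) (D w); have := SY n w; lra.
Qed.

Lemma conv_in_prob_dominated_integrable : P.-integrable setT (EFin \o D).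
Proof.
apply/integrableP; split; first exact/measurable_EFinP.
case/integrableP : intZ => _; apply: le_lt_trans.
apply: ae_ge0_le_integral => //.
- by apply: measurableT_comp => //; exact/measurable_EFinP.
- exact: measurableT_comp.
- apply: ae_off_N => w /D_le_Z DZ _.
  by rewrite lee_fin (ger0_norm (Z_ge0 w)).
Qed.

Lemma conv_in_prob_dominated_L1 (eps : R) : 0 < eps -> \forall n \near \oo,
  (\int[P]_x `|(S n x - D x)%:E| <= eps%:E)%E.
Proof.
move=> eps0; have eta0 : 0 < eps / 2 by exact: divr_gt0.
have [del [del0 smallZ]] := integral_normr_continuous intZ eta0.
have /fine_cvgP[finA /cvgrPdist_lt /(_ del del0) PA_small] := SD eta0.
near=> n.
have mSD : measurable_fun setT (fun w => S n w - D w) by exact: measurable_funB.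
have mSDE : measurable_fun setT (fun w => `|(S n w - D w)%:E|%E).
  by apply: measurableT_comp => //; exact/measurable_EFinP.
have finPA : P [set w | eps / 2 < `|S n w - D w|] \is a fin_num.
  by near: n; exact: finA.
have : `|0 - fine (P [set w | eps / 2 < `|S n w - D w|])| < del.
  by near: n; exact: PA_small.
set A := [set w | _ < _] in finPA * => PA_dist.
have mA : d.-measurable A by apply: measurable_lt_fun => //; exact: measurableT_comp.
have PA : (P A < del%:E)%E.
  by rewrite -(fineK finPA) lte_fin; apply: le_lt_trans PA_dist; rewrite sub0r normrN ler_norm.
rewrite (ge0_integral_setC _ mA) // [eps]splitr EFinD; apply: leeD.
- apply: (@le_trans _ _ (\int[P]_(x in A) `|(Z x)%:E|)%E).
    apply: ae_ge0_le_integral => //.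
    - exact: measurable_funTS.
    - by apply: measurable_funTS; exact: measurableT_comp.
    - by apply: ae_off_N => w /(SD_le_Z n) SDZ _; rewrite lee_fin (ger0_norm (Z_ge0 w)).
  apply/ltW; have := smallZ A mA PA; rewrite -lte_fin /Rintegral fineK //.
  exact: (integrable_fin_num mA (integrableS measurableT mA (subsetT A) (integrable_abse intZ))).
- apply: integral_le_cst; [exact: measurableC | exact: measurable_funTS | exact: ltW |].
  by move=> w /negP; rewrite -leNgt => SDw; rewrite abse_ge0 abse_EFin lee_fin.
Unshelve. all: by end_near.
Qed.

End dominated_convergence_in_probability.

End convergence_in_probability.

Lemma conv_in_prob_cond_exp d (T : measurableType d) (R : realType)
    (P : probability T R) (G : set (set T)) (S V : nat -> T -> R) (D Dt Y : T -> R) :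
  is_sub_sigma_algebra G -> P.-integrable setT (EFin \o Y) ->
  (forall n w, `|S n w| <= Y w) -> conv_in_prob P S D ->
  (forall n, is_cond_exp P G (S n) (V n)) -> is_cond_exp P G D Dt ->
  conv_in_prob P V Dt.
Proof.
move=> HG intY SY SD SV DDt.
have WZ n := is_cond_expB HG (SV n) DDt.
have mS n : measurable_fun setT (S n).
  by have [/integrableP[/measurable_EFinP]] := SV n.
have [/integrableP[/measurable_EFinP mD _] _ _ _] := DDt.
apply: conv_in_prob_L1 => [n|eps eps0].
  by have [_ /integrableP[/measurable_EFinP]] := WZ n.
have := conv_in_prob_dominated_L1 mS mD intY SY SD eps0.
by apply: filterS => n; apply: le_trans; exact: cond_exp_contraction (WZ n).
Qed.

Lemma is_partition_nth_itv (R : realType) (t : R) (s : seq R) k :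
  is_partition t s -> (k < size s)%N -> 0 <= nth 0 s k <= t.
Proof.
case=> s0 st sorted_s ks.
have mono := lt_sorted_leq_nth 0 sorted_s.
have nth0 : nth 0 s 0 = 0 by case: s s0 {st sorted_s mono} ks.
have s_gt0 : (0 < size s)%N by exact: leq_ltn_trans (leq0n k) ks.
apply/andP; split; first by rewrite -[X in X <= _]nth0 mono ?inE.
by rewrite -st -nth_last mono ?inE ?prednK // -ltnS prednK.
Qed.

Lemma is_cond_exp_su_dec d (T : measurableType d) (R : realType)
    (P : probability T R) (G : set (set T)) (m : nat)
    (U Ut : ('I_m -> R) -> T -> R) (t : R) (s : seq R) (i : 'I_m) :
  is_sub_sigma_algebra G -> is_partition t s ->
  (forall tau, (forall j, 0 <= tau j <= t) -> is_cond_exp P G (U tau) (Ut tau)) ->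
  is_cond_exp P G (su_dec U s i) (su_dec Ut s i).
Proof.
move=> HG s_part UUt; apply: (is_cond_exp_sum HG) => l.
have l_lt : (l.+1 < size s)%N by have := ltn_ord l; lia.
apply: (is_cond_expB HG); apply: UUt => j;
  by case: ifP => _; apply: is_partition_nth_itv s_part _; last exact: ltnW.
Qed.

Theorem lemma5p3 (d : measure_display) (T : measurableType d) (R : realType)
  (P : probability T R) (m : nat)
  (X : 'I_m -> R -> T -> R) (rho : ('I_m -> R -> T -> R) -> T -> R)
  (Rp : R -> T -> R) (t : R) (Tn : nat -> seq R)
  (D : 'I_m -> T -> R) (G : set (set T)) (Y : T -> R)
  (Ut : ('I_m -> R) -> T -> R) :
  (forall s, Rp s = rho (fun j u => X j (Num.min u s))) ->
  0 <= t ->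
  (forall n, is_partition t (Tn n)) ->
  (fun n => mesh (Tn n)) @ \oo --> (0 : R) ->
  (forall i, measurable_fun setT (D i)) ->
  (forall i, conv_in_prob P (fun n => su_dec (surface rho X) (Tn n) i) (D i)) ->
  is_sub_sigma_algebra G ->
  P.-integrable setT (EFin \o Y) ->
  (forall i n w, `|su_dec (surface rho X) (Tn n) i w| <= Y w) ->
  (forall tau : 'I_m -> R, (forall j, 0 <= tau j <= t) ->
     is_cond_exp P G (surface rho X tau) (Ut tau)) ->
  (exists Dt : 'I_m -> T -> R, forall i, is_cond_exp P G (D i) (Dt i)) /\
  (forall Dt : 'I_m -> T -> R, (forall i, is_cond_exp P G (D i) (Dt i)) ->
     forall i, conv_in_prob P (fun n => su_dec Ut (Tn n) i) (Dt i)).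
Proof.
move=> _ _ Tn_part _ mD SD HG intY SY UUt.
have SV n i := is_cond_exp_su_dec i HG (Tn_part n) UUt.
have mS i n : measurable_fun setT (su_dec (surface rho X) (Tn n) i).
  by have [/integrableP[/measurable_EFinP]] := SV n i.
split.
  have intD i := conv_in_prob_dominated_integrable (mS i) (mD i) intY (SY i) (SD i).
  have /choice[Dt DDt] := fun i => cond_exp_exists HG (intD i).
  by exists Dt.
move=> Dt DDt i.
exact: conv_in_prob_cond_exp HG intY (SY i) (SD i) (fun n => SV n i) (DDt i).
Qed.
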